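(* For each finite set $B$, the assignment $M\mapsto M^a=(a_M\circ v_M,\,v_M,\,f_M)$ is a bijection from the set of maps whose corner set is $B$ onto the set of $a$-maps acting on $B$.
   Context: A map is a triple $M=(C_M,v_M,f_M)$ where $C_M$ is a finite cubic graph and $v_M,f_M$ are disjoint perfect matchings whose union is a disjoint union of 4-cycles; $a_M$ is the third perfect matching; the vertices of $C_M$ are the corners, and a map is regarded as determined by its three perfect matchings. Each perfect matching is identified with the fixed-point-free involution of the corners sending $x$ to the other end of the matching edge at $x$. An $a$-map on a finite set $B$ is a triple $(R,\Theta,\Phi)$ of permutations of $B$ with: (am1) $\Theta\Phi=\Phi\Theta$ and $\Theta^2=\Phi^2=\mathrm{id}$; (am2) $x,\Theta x,\Phi x,\Theta\Phi x$ are pairwise distinct for all $x\in B$; (am3) $R\Theta=\Theta R^{-1}$; (am4) $R^n(x)\ne\Theta x$ for all integers $n$ and all $x\in B$. *)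

From mathcomp Require Import all_boot all_fingroup.
Set Implicit Arguments. Unset Strict Implicit. Unset Printing Implicit Defensive.

Local Open Scope group_scope.

(* A perfect matching on the corner set B is identified with the
   fixed-point-free involution sending x to the other end of its edge. *)
Definition fpf_involution (B : finType) (s : {perm B}) : Prop :=
  forall x, s (s x) = x /\ s x <> x.

(* A map with corner set B, regarded as determined by its three perfect
   matchings (a_M, v_M, f_M), encoded as the triple (a, v, f).
   - a, v, f are perfect matchings (fixed-point-free involutions);
   - v and f are disjoint and v ∪ f is a disjoint union of 4-cycles:
     from every corner x the alternating v,f-walk
        x, v x, f (v x), v (f (v x))
     visits 4 distinct corners and closes up (f (v (f (v x))) = x);
     this also forces v x <> f x (disjointness).
   - a is the third perfect matching (the remaining edges of the cubic
     graph C_M, whose vertices are the corners). *)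
Definition is_map (B : finType) (M : {perm B} * {perm B} * {perm B}) : Prop :=
  let: (a, v, f) := M in
  [/\ fpf_involution a, fpf_involution v, fpf_involution f &
      forall x, f (v (f (v x))) = x /\
        uniq [:: x; v x; f (v x); v (f (v x))]].

Definition is_amap (B : finType) (A : {perm B} * {perm B} * {perm B}) : Prop :=
  let: (R, Th, Ph) := A in
  [/\ (* am1 *) (forall x, Th (Ph x) = Ph (Th x)) /\
                (forall x, Th (Th x) = x) /\ (forall x, Ph (Ph x) = x),
      (* am2 *) (forall x, uniq [:: x; Th x; Ph x; Th (Ph x)]),
      (* am3 *) (forall x, R (Th x) = Th ((R^-1) x)) &
      (* am4 *) (forall (n : nat) x, (R ^+ n) x <> Th x /\ (R ^- n) x <> Th x)].

(* The composition a_M ∘ v_M as a permutation: x |-> a (v x).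
   (In mathcomp, (s * t) x = t (s x).) *)
Definition map_to_amap (B : finType) (M : {perm B} * {perm B} * {perm B})
  : {perm B} * {perm B} * {perm B} :=
  let: (a, v, f) := M in (v * a, v, f).

Lemma map_to_amapE (B : finType) (a v f : {perm B}) x :
  (map_to_amap (a, v, f)).1.1 x = a (v x).
Proof. by rewrite /= permM. Qed.

From mathcomp Require Import all_boot all_fingroup.
Set Implicit Arguments. Unset Strict Implicit. Unset Printing Implicit Defensive.
Local Open Scope group_scope.

(* The pair (v, f) of a map and the pair (Theta, Phi) of an a-map satisfy the
   same conditions: a disjoint union of v,f-squares is the same thing as two
   commuting involutions with free joint action.  So everything reduces to the
   third component, where R = a o v is a product of two fixed-point-free
   involutions.  Then Theta R Theta = R^-1 gives (am3), and R^(n+2) x = Theta x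
   forces R^n (R x) = Theta (R x), so (am4) follows by descent to n = 0, 1.
   Conversely a := R o Theta is an involution by (am3) and is fixed-point-free
   by (am4) for n = 1. *)

Lemma uniq_swap34 (T : eqType) (a b c d : T) :
  uniq [:: a; b; c; d] -> uniq [:: a; b; d; c].
Proof.
rewrite -(perm_uniq (_ : perm_eq [:: a; b; c; d] _)) //.
by rewrite (perm_catl [:: a; b] (_ : perm_eq [:: c; d] [:: d; c])) //
  (perm_catC [:: c] [:: d]).
Qed.

Lemma involutive_mulgg (B : finType) (s : {perm B}) :
  (forall x, s (s x) = x) -> s * s = 1.
Proof. by move=> ss; apply/permP=> x; rewrite permM ss perm1. Qed.

Section ProductOfInvolutions.

Variables (B : finType) (s t : {perm B}).
Hypotheses (s_fpf : fpf_involution s) (t_fpf : fpf_involution t).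

Let ss x : s (s x) = x := (s_fpf x).1.
Let tt x : t (t x) = x := (t_fpf x).1.

Lemma invol_prod_conj x : (s * t) (s x) = s (((s * t)^-1) x).
Proof.
set y := ((s * t)^-1) x; have <- : (s * t) y = x by rewrite permKV.
by rewrite !permM ss tt.
Qed.

Lemma invol_prod_expg_neq n x : ((s * t) ^+ n) x <> s x.
Proof.
pose P n := forall x, ((s * t) ^+ n) x <> s x.
suff [] : P n /\ P n.+1 by [].
elim: n => [|n [IHn IHn1]].
  split=> y; first by rewrite expg0 perm1 => /esym; apply: (s_fpf y).2.
  by rewrite expg1 permM; apply: (t_fpf (s y)).2.
split=> // y; rewrite expgSr expgS !permM => E.
apply: (@IHn ((s * t) y)); rewrite permM.
by have := congr1 (fun z => s (t z)) E; rewrite tt ss.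
Qed.

Lemma invol_prod_expVg_neq n x : ((s * t) ^- n) x <> s x.
Proof.
move=> E; apply: (@invol_prod_expg_neq n (s x)).
by rewrite ss -E permKV.
Qed.

End ProductOfInvolutions.

Lemma map_squares_commute (B : finType) (v f : {perm B}) :
  fpf_involution v -> fpf_involution f ->
  (forall x, f (v (f (v x))) = x /\ uniq [:: x; v x; f (v x); v (f (v x))]) ->
  (forall x, v (f x) = f (v x)) /\ (forall x, uniq [:: x; v x; f x; v (f x)]).
Proof.
move=> v_fpf f_fpf sq.
have vf x : v (f x) = f (v x).
  by have [E _] := sq (v (f x)); rewrite (v_fpf _).1 (f_fpf _).1 in E; rewrite E.
split=> // x; apply: uniq_swap34.
by have [_] := sq x; rewrite -vf (v_fpf _).1.
Qed.

Lemma commuting_involutions_squares (B : finType) (Th Ph : {perm B}) :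
  (forall x, Th (Ph x) = Ph (Th x)) ->
  (forall x, Th (Th x) = x) -> (forall x, Ph (Ph x) = x) ->
  (forall x, uniq [:: x; Th x; Ph x; Th (Ph x)]) ->
  [/\ fpf_involution Th, fpf_involution Ph &
      forall x, Ph (Th (Ph (Th x))) = x /\
        uniq [:: x; Th x; Ph (Th x); Th (Ph (Th x))]].
Proof.
move=> TP TT PP U; split.
- by move=> x; split=> // E; have := U x; rewrite /= E inE eqxx.
- by move=> x; split=> // E; have := U x; rewrite /= E !inE eqxx !orbT.
- move=> x; split; first by rewrite -TP PP TT.
  by rewrite -TP TT; apply: uniq_swap34.
Qed.

Lemma map_to_amap_inj (B : finType) : injective (@map_to_amap B).
Proof.
move=> [[a1 v1] f1] [[a2 v2] f2] /= [E1 Ev Ef].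
by rewrite -Ev -Ef in E1 *; rewrite (mulgI _ _ _ E1).
Qed.

Definition amap_to_map (B : finType) (A : {perm B} * {perm B} * {perm B})
  : {perm B} * {perm B} * {perm B} :=
  let: (R, Th, Ph) := A in (Th * R, Th, Ph).

Lemma amap_to_mapK (B : finType) (A : {perm B} * {perm B} * {perm B}) :
  is_amap A -> map_to_amap (amap_to_map A) = A.
Proof.
case: A => [[R Th] ?] [[_ [TT _]] _ _ _] /=.
by rewrite mulgA involutive_mulgg // mul1g.
Qed.

Lemma amap_to_map_fpf (B : finType) (R Th : {perm B}) :
  fpf_involution Th -> (forall x, R (Th x) = Th ((R^-1) x)) ->
  (forall x, R x <> Th x) -> fpf_involution (Th * R).
Proof.
move=> Th_fpf RTh R_neq x; rewrite !permM; split.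
  by rewrite RTh permK (Th_fpf x).1.
by move=> E; apply: (R_neq (Th x)); rewrite E (Th_fpf x).1.
Qed.

Theorem proposition1p1 (B : finType) :
  (forall M : {perm B} * {perm B} * {perm B},
     is_map M -> is_amap (map_to_amap M)) /\
  (forall M1 M2 : {perm B} * {perm B} * {perm B}, is_map M1 -> is_map M2 ->
     map_to_amap M1 = map_to_amap M2 -> M1 = M2) /\
  (forall A : {perm B} * {perm B} * {perm B},
     is_amap A -> exists2 M, is_map M & map_to_amap M = A).
Proof.
split; [|split].
- move=> [[a v] f] [a_fpf v_fpf f_fpf sq] /=.
  have [vf U] := map_squares_commute v_fpf f_fpf sq.
  split=> //.
  + by split=> [x|]; [rewrite vf | split=> x; [exact: (v_fpf x).1 | exact: (f_fpf x).1]].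
  + exact: invol_prod_conj.
  + by move=> n x; split; [exact: invol_prod_expg_neq | exact: invol_prod_expVg_neq].
- by move=> M1 M2 _ _ /map_to_amap_inj.
- move=> [[R Th] Ph] A; exists (amap_to_map (R, Th, Ph)); last exact: amap_to_mapK.
  case: A => [[TP [TT PP]] U RTh R_neq].
  have [Th_fpf Ph_fpf sq] := commuting_involutions_squares TP TT PP U.
  split=> //; apply: amap_to_map_fpf => // x.
  by have [] := R_neq 1%N x; rewrite expg1.
Qed.
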